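(* Let $I\subseteq E$ and let $v\in\Delta_I$ be an equilibrium ($F(v)=0$). Then $v$ is linearly stable (respectively linearly unstable) if and only if all eigenvalues of the restriction of $DF(v)$ to $V_I=\{x\in\mathbb R^N:\sum_ix_i=0,\ x_i=0\ \forall i\notin I\}$ have negative real parts (respectively, some eigenvalue of this restriction has positive real part), i.e. if and only if it is linearly stable (respectively unstable) for the restriction of $F$ to the face $\Delta_I$.
   Context: Let $N\ge2$, $E=\{1,\dots,N\}$, $\alpha>1$, and let $A=(A_{i,j})_{i,j\le N}$ be a symmetric matrix with nonnegative entries, $A_{i,j}>0$ for $i\ne j$, and $\sum_j A_{i,j}$ independent of $i$. Let $\Delta=\{v\in\mathbb R_+^N:\ \sum_i v_i=1,\ v_i\le 3/4 \text{ whenever } A_{i,i}=0\}$ and $\Delta_I=\{v\in\Delta: v_i=0\ \forall i\notin I\}$. For $v$ with nonnegative coordinates let $v^\alpha=(v_i^\alpha)_i$, $H(v)=\sum_{i,j}A_{i,j}v_i^\alpha v_j^\alpha$ and $\pi_i(v)=v_i^\alpha(Av^\alpha)_i/H(v)$; on $\Delta$, $F(v)=-v+\pi(v)$, and $DF(v)$ is the differential at $v$ of $v\mapsto-v+\pi(v)$, viewed as a linear map of $T_0\Delta=\{x:\sum_ix_i=0\}$ (the subspace $V_I$ is invariant under it when $v\in\Delta_I$ is an equilibrium). An equilibrium $v$ is linearly stable if all eigenvalues of $DF(v)$ have negative real parts, and linearly unstable if one of them has positive real part. *)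

From HB Require Import structures.
From mathcomp Require Import all_boot all_order all_algebra.
From mathcomp Require Import all_classical all_reals all_analysis.
From mathcomp Require Import complex.
Set Implicit Arguments. Unset Strict Implicit. Unset Printing Implicit Defensive.
Import Order.TTheory GRing.Theory Num.Theory.
Local Open Scope ring_scope.
Local Open Scope complex_scope.

Section Replicator.
Context {R : realType} {N : nat}.

(* v^alpha, coordinatewise; |.| makes the map defined (and C^1, since alpha>1)
   on all of R^N, agreeing with v_i^alpha on nonnegative coordinates. *)
Definition vpow (alpha : R) (v : 'rV[R]_N) : 'rV[R]_N :=
  \row_i (`|v ord0 i| `^ alpha).

Definition Hf (A : 'M[R]_N) (alpha : R) (v : 'rV[R]_N) : R :=
  \sum_i \sum_j A i j * vpow alpha v ord0 i * vpow alpha v ord0 j.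

Definition pi_map (A : 'M[R]_N) (alpha : R) (v : 'rV[R]_N) : 'rV[R]_N :=
  \row_i (vpow alpha v ord0 i * (\sum_j A i j * vpow alpha v ord0 j)
          / Hf A alpha v).

Definition Fmap (A : 'M[R]_N) (alpha : R) (v : 'rV[R]_N) : 'rV[R]_N :=
  - v + pi_map A alpha v.

Definition differential (f : 'rV[R]_N -> 'rV[R]_N) := fun v => 'd f v.
Definition DF (A : 'M[R]_N) (alpha : R) (v : 'rV[R]_N) : 'rV[R]_N -> 'rV[R]_N :=
  fun x => differential (Fmap A alpha) v x.

Definition in_Delta (A : 'M[R]_N) (v : 'rV[R]_N) : Prop :=
  [/\ forall i, 0 <= v ord0 i,
      \sum_i v ord0 i = 1
    & forall i, A i i = 0 -> v ord0 i <= 3 / 4].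

Definition in_face (A : 'M[R]_N) (I : {set 'I_N}) (v : 'rV[R]_N) : Prop :=
  in_Delta A v /\ forall i, i \notin I -> v ord0 i = 0.

Definition cplx_lin (L : 'rV[R]_N -> 'rV[R]_N) (z : 'rV[R[i]]_N) : 'rV[R[i]]_N :=
  \row_k ((L (map_mx (@complex.Re R) z)) ord0 k +i* (L (map_mx (@complex.Im R) z)) ord0 k).

(* Complexifications of the real subspaces T_0 Delta and V_I. *)
Definition T0 (z : 'rV[R[i]]_N) : Prop := \sum_i z ord0 i = 0.
Definition VI (I : {set 'I_N}) (z : 'rV[R[i]]_N) : Prop :=
  T0 z /\ forall i, i \notin I -> z ord0 i = 0.

(* lam is an eigenvalue of the restriction of L to the (L-invariant) subspace W:
   there is a nonzero (complex) eigenvector of L lying in (the complexification of) W. *)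
Definition eigenvalue_on (L : 'rV[R]_N -> 'rV[R]_N) (W : 'rV[R[i]]_N -> Prop)
  (lam : R[i]) : Prop :=
  exists z, [/\ W z, z != 0 & cplx_lin L z = lam *: z].

Definition lin_stable_on (L : 'rV[R]_N -> 'rV[R]_N) (W : 'rV[R[i]]_N -> Prop) : Prop :=
  forall lam, eigenvalue_on L W lam -> complex.Re lam < 0.

Definition lin_unstable_on (L : 'rV[R]_N -> 'rV[R]_N) (W : 'rV[R[i]]_N -> Prop) : Prop :=
  exists lam, eigenvalue_on L W lam /\ 0 < complex.Re lam.

End Replicator.

From HB Require Import structures.
From mathcomp Require Import all_boot all_order all_algebra.
From mathcomp Require Import all_classical all_reals all_analysis.
From mathcomp Require Import complex.
Import Order.TTheory GRing.Theory Num.Theory.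
Import numFieldNormedType.Exports.
Local Open Scope ring_scope.

(** At an equilibrium [v] in the face [Delta_I] every coordinate [v_k], [k \notin I],
    vanishes. Since [alpha > 1], [s |-> |s|^alpha] has zero derivative at [0], so the
    [k]-th component of [pi], which carries the factor [v_k^alpha], has zero
    differential at [v]: the [k]-th row of [DF(v)] is [-e_k]. Hence an eigenvector of
    [DF(v)] in [T_0 Delta] either lies in [V_I] or has a nonzero coordinate off [I],
    and then its eigenvalue is [-1]. The spectrum on [T_0 Delta] is thus the spectrum
    on [V_I] plus possibly [-1], which changes neither stability nor instability. *)

Section NormPower.
Variables (R : realType) (a : R).
Hypothesis a_gt1 : 1 < a.
Local Open Scope classical_set_scope.

Lemma is_derive_normr_powR0 : is_derive (0 : R) 1 (fun s : R => `|s| `^ a) 0.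
Proof.
have quotient_cvg0 : (fun h : R => h^-1 * `|h| `^ a) @ 0^' --> 0.
  (* the quotient has modulus [|h|^(a-1)] *)
  apply/cvgr0Pnorm_lt => e e0.
  have a1_gt0 : 0 < a - 1 by rewrite subr_gt0.
  have := powR_cvg0 a1_gt0 => /cvgr0Pnorm_lt /(_ e e0).
  rewrite !near_withinE => /nbhs_normP [d /= d_gt0 small_pow].
  apply/nbhs_normP; exists d => // h /=; rewrite sub0r normrN => hd h_neq0.
  have h_gt0 : 0 < `|h| by rewrite normr_gt0.
  have := small_pow `|h|; rewrite /= sub0r normrN normr_id => /(_ hd h_gt0).
  have -> : `|h| `^ a = `|h| `^ (a - 1) * `|h|.
    by rewrite -{3}(powRr1 (normr_ge0 h)) -powRD ?subrK // (gt_eqF h_gt0) implybT.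
  by rewrite normrM normfV normrM normr_id mulrCA mulVf ?gt_eqF // mulr1.
have quotientE :
    (fun h : R => h^-1 *: (((fun s : R => `|s| `^ a) \o shift 0) (h *: 1) - `|0 : R| `^ a))
    = (fun h : R => h^-1 * `|h| `^ a).
  apply/funext => h /=.
  rewrite addr0 normr0 powR0 ?subr0 ?[h%:A]mulr1 //.
  by rewrite gt_eqF // (lt_trans ltr01).
split; rewrite /derivable /derive quotientE; last exact: cvg_lim.
by apply/cvg_ex; exists 0.
Qed.

Lemma differentiable_normr_powR (t : R) : 0 <= t ->
  differentiable (fun s : R => `|s| `^ a) t.
Proof.
rewrite le_eqVlt => /orP [/eqP <-|t0]; apply/derivable1_diffP.
  exact: (@ex_derive _ _ _ _ _ _ _ is_derive_normr_powR0).
have hd : derivable (fun s : R => s `^ a) t 1.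
  by apply: derivable_powR; rewrite in_itv /= t0.
apply: (near_eq_derivable _ hd).
near=> s; rewrite /= gtr0_norm //; near: s; exact: lt_nbhsr.
Unshelve. all: by end_near. Qed.

Lemma diff_normr_powR0 (h : R) : 'd (fun s : R => `|s| `^ a) 0 h = 0.
Proof.
have [der0 val0] := is_derive_normr_powR0.
by rewrite deriv1E // derive1E val0 scaler0.
Qed.

End NormPower.

Section CoordinateDifferentials.
Variables (R : realType) (V : normedModType R) (m n : nat).

Lemma diff_coord (x h : 'M[R]_(m, n)) i j :
  'd (fun M : 'M[R]_(m, n) => M i j) x h = h i j.
Proof.
have @coord : {linear 'M[R]_(m, n) -> R}.
  by exists (fun M : 'M[R]_(m, n) => M i j); do 2![eexists]; do ?[constructor];
     rewrite ?mxE// => ? *; rewrite ?mxE//; move=> ?; rewrite !mxE.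
by rewrite (_ : (fun _ => _) = coord) // diff_lin //; exact: coord_continuous.
Qed.

Lemma diff_coord_comp (G : V -> 'M[R]_(m, n)) (x h : V) i j :
  differentiable G x -> 'd G x h i j = 'd (fun w => G w i j) x h.
Proof.
move=> dG; rewrite -(diff_coord (G x)).
have -> : (fun w => G w i j) = (fun M : 'M[R]_(m, n) => M i j) \o G by [].
by rewrite (diff_comp dG (differentiable_coord (G x) i j)).
Qed.

Lemma differentiable_sum_pointwise k (F : 'I_k -> V -> R) (x : V) :
  (forall i, differentiable (F i) x) ->
  differentiable (fun w => \sum_(i < k) F i w) x.
Proof.
move=> dF; rewrite (_ : (fun w => _) = \sum_i F i); first exact: differentiable_sum.
by apply/funext => w; rewrite fct_sumE.
Qed.

Lemma diffM_eq0 (p q : V -> R) (x h : V) :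
  differentiable p x -> differentiable q x -> p x = 0 -> 'd p x h = 0 ->
  'd (p * q) x h = 0.
Proof.
move=> dp dq px0 dpx0.
have -> : 'd (p * q) x h = p x * 'd q x h + q x * 'd p x h by rewrite diffM.
by rewrite px0 dpx0 mul0r mulr0 addr0.
Qed.

End CoordinateDifferentials.

Section ReplicatorDifferential.
Variables (R : realType) (N : nat) (A : 'M[R]_N) (alpha : R).
Hypothesis alpha_gt1 : 1 < alpha.
Local Notation V := 'rV[R]_N.

Lemma vpow_coordE (j : 'I_N) :
  (fun w : V => vpow alpha w ord0 j) =
  (fun s : R => `|s| `^ alpha) \o (fun w : V => w ord0 j).
Proof. by apply/funext => w; rewrite /vpow mxE. Qed.

Lemma differentiable_vpow (x : V) j : 0 <= x ord0 j ->
  differentiable (fun w : V => vpow alpha w ord0 j) x.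
Proof.
move=> xj_ge0; rewrite vpow_coordE.
apply: differentiable_comp; first exact: differentiable_coord.
exact: differentiable_normr_powR.
Qed.

Lemma diff_vpow_eq0 (x h : V) j : x ord0 j = 0 ->
  'd (fun w : V => vpow alpha w ord0 j) x h = 0.
Proof.
move=> xj0; rewrite vpow_coordE diff_comp /=; last first.
- by apply: differentiable_normr_powR; rewrite // xj0.
- exact: differentiable_coord.
by rewrite xj0 diff_normr_powR0.
Qed.

Lemma vpow_eq0 (x : V) j : x ord0 j = 0 -> vpow alpha x ord0 j = 0.
Proof.
move=> xj0; rewrite /vpow mxE xj0 normr0 powR0 //.
by rewrite gt_eqF // (lt_trans ltr01).
Qed.

Lemma Hf_neq0_of_fixpoint (v : V) :
  Fmap A alpha v = 0 -> \sum_i v ord0 i = 1 -> Hf A alpha v != 0.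
Proof.
move=> Fv0 v_sum1; apply/eqP => Hf0.
(* [H v = 0] would force [pi v = 0], as [x / 0 = 0]; then [v = 0] is not in the simplex *)
have pi0 : pi_map A alpha v = 0 by apply/rowP => i; rewrite !mxE Hf0 invr0 mulr0.
have v0 : v = 0 by apply/eqP; move: Fv0; rewrite /Fmap pi0 addr0 => /eqP; rewrite oppr_eq0.
move: v_sum1; rewrite v0 big1 => [/esym/eqP|i _]; last by rewrite mxE.
by rewrite oner_eq0.
Qed.

Section AtNonnegativePoint.
Variable x : V.
Hypothesis x_ge0 : forall i, 0 <= x ord0 i.

Lemma differentiable_Hf : differentiable (Hf A alpha) x.
Proof.
apply: differentiable_sum_pointwise => i; apply: differentiable_sum_pointwise => j.
apply: differentiableM; last exact: differentiable_vpow.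
by apply: differentiableM; [exact: differentiable_cst | exact: differentiable_vpow].
Qed.

Hypothesis Hf_neq0 : Hf A alpha x != 0.

Lemma pi_map_coordE k :
  (fun w => pi_map A alpha w ord0 k) =
  (fun w => vpow alpha w ord0 k) *
  (fun w => (\sum_j A k j * vpow alpha w ord0 j) * (Hf A alpha w)^-1).
Proof. by apply/funext => w; rewrite /pi_map mxE mulrA. Qed.

Lemma differentiable_pi_map_cofactor k :
  differentiable
    (fun w => (\sum_j A k j * vpow alpha w ord0 j) * (Hf A alpha w)^-1) x.
Proof.
apply: differentiableM; last exact: differentiableV differentiable_Hf _.
apply: differentiable_sum_pointwise => j.
by apply: differentiableM; [exact: differentiable_cst | exact: differentiable_vpow].
Qed.

Lemma differentiable_pi_map : differentiable (pi_map A alpha) x.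
Proof.
rewrite (_ : pi_map A alpha =
    \sum_(k < N) (fun w => pi_map A alpha w ord0 k *: (delta_mx ord0 k : V))).
  apply: differentiable_sum => k; apply: differentiableZl.
  rewrite pi_map_coordE; apply: differentiableM; first exact: differentiable_vpow.
  exact: differentiable_pi_map_cofactor.
apply/funext => w; rewrite fct_sumE.
by rewrite {1}(matrix_sum_delta (pi_map A alpha w)) big_ord1.
Qed.

Lemma diff_Fmap (h : V) : 'd (Fmap A alpha) x h = - h + 'd (pi_map A alpha) x h.
Proof.
have [did diff_id] := is_diff_id x.
have -> : Fmap A alpha = - (@id V) + pi_map A alpha by apply/funext.
have dFmap := diffD (differentiableN did) differentiable_pi_map.
rewrite [LHS](congr1 (fun g : V -> V => g h) dFmap); congr (_ + _).
rewrite [LHS](congr1 (fun g : V -> V => g h) (diffN did)).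
exact: (congr1 (fun g : V -> V => - g h) diff_id).
Qed.

Lemma diff_Fmap_coord_opp (h : V) k : x ord0 k = 0 ->
  'd (Fmap A alpha) x h ord0 k = - h ord0 k.
Proof.
move=> xk0; rewrite diff_Fmap mxE diff_coord_comp; last exact: differentiable_pi_map.
rewrite mxE pi_map_coordE diffM_eq0 ?addr0 //.
- exact: differentiable_vpow.
- exact: differentiable_pi_map_cofactor.
- exact: vpow_eq0.
- exact: diff_vpow_eq0.
Qed.

End AtNonnegativePoint.
End ReplicatorDifferential.

Section SpectrumOffFace.
Variables (R : realType) (N : nat) (L : 'rV[R]_N -> 'rV[R]_N) (I : {set 'I_N}).
Hypothesis L_opp_off_face : forall k, k \notin I -> forall h, L h ord0 k = - h ord0 k.

Lemma cplx_lin_coord_opp z k : k \notin I -> cplx_lin L z ord0 k = - z ord0 k.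
Proof.
by move=> kI; rewrite /cplx_lin mxE !L_opp_off_face // !mxE; case: (z ord0 k).
Qed.

Lemma eigenvalue_on_VI_T0 lam : eigenvalue_on L (VI I) lam -> eigenvalue_on L T0 lam.
Proof. by move=> [z [[T0z _] z_neq0 Lz]]; exists z. Qed.

Lemma eigenvalue_on_T0_VI lam :
  eigenvalue_on L T0 lam -> eigenvalue_on L (VI I) lam \/ lam = -1.
Proof.
move=> [z [T0z z_neq0 Lz]].
have [z_face|] := pselect (forall k, k \notin I -> z ord0 k = 0).
  by left; exists z.
move=> /existsNP [k /not_implyP [kI /eqP zk_neq0]]; right.
have := congr1 (fun w : 'rV[R[i]]_N => w ord0 k) Lz.
rewrite /= cplx_lin_coord_opp // mxE => zk_eigen.
by apply: (mulIf zk_neq0); rewrite mulN1r zk_eigen.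
Qed.

Lemma Re_N1_lt0 : complex.Re (-1 : R[i]) < 0.
Proof. by rewrite /= ltrN10. Qed.

Lemma lin_stable_on_T0_VI : lin_stable_on L T0 <-> lin_stable_on L (VI I).
Proof.
split=> stable lam => [/eigenvalue_on_VI_T0|]; first exact: stable.
by case/eigenvalue_on_T0_VI => [/stable //|->]; exact: Re_N1_lt0.
Qed.

Lemma lin_unstable_on_T0_VI : lin_unstable_on L T0 <-> lin_unstable_on L (VI I).
Proof.
split=> -[lam [eig Re_gt0]]; last by exists lam; split=> //; exact: eigenvalue_on_VI_T0.
case/eigenvalue_on_T0_VI: eig => [eigI|lam_N1]; first by exists lam.
by move: Re_gt0; rewrite lam_N1 => /(lt_trans Re_N1_lt0); rewrite ltxx.
Qed.

End SpectrumOffFace.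

Theorem corollary3p8 (R : realType) (N : nat) (A : 'M[R]_N) (alpha : R)
    (I : {set 'I_N}) (v : 'rV[R]_N) :
  (2 <= N)%N ->
  1 < alpha ->
  A^T = A ->
  (forall i j, 0 <= A i j) ->
  (forall i j, i != j -> 0 < A i j) ->
  (forall i k, \sum_j A i j = \sum_j A k j) ->
  in_face A I v ->
  Fmap A alpha v = 0 ->
  (lin_stable_on (DF A alpha v) T0 <-> lin_stable_on (DF A alpha v) (VI I)) /\
  (lin_unstable_on (DF A alpha v) T0 <-> lin_unstable_on (DF A alpha v) (VI I)).
Proof.
(* only [alpha > 1] and the equilibrium lying in the face are needed *)
move=> _ alpha_gt1 _ _ _ _ [[v_ge0 v_sum1 _] v_face] Fv0.
have DF_opp_off_face k : k \notin I -> forall h, DF A alpha v h ord0 k = - h ord0 k.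
  move=> kI h; apply: diff_Fmap_coord_opp => //; last exact: v_face.
  exact: Hf_neq0_of_fixpoint.
by split; [apply: lin_stable_on_T0_VI | apply: lin_unstable_on_T0_VI].
Qed.
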